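(* Let $T$ be a reduced linear trellis of length $n$ over $\mathbb{F}$, let $\{\mathfrak{s}_i\}_{i\in\mathcal{I}}$ be a family of spans, and let $\mathfrak{s}$ be a span such that $\mathfrak{s}\not\le\mathfrak{s}_i$ for every $i\in\mathcal{I}$. Then $$\mathbb{S}_{\mathfrak{s}}(T)\cap\sum_{i\in\mathcal{I}}\mathbb{S}_{\mathfrak{s}_i}(T)\ \subseteq\ \mathbb{S}_{<\mathfrak{s}}(T).$$
   Context: Let $\mathbb{F}$ be a finite field with $q$ elements and $n\ge1$; indices are taken in $\mathbb{Z}_n$. A trellis $T$ of length $n$ over $\mathbb{F}$ consists of pairwise disjoint finite vertex sets $V_i(T)$, $i\in\mathbb{Z}_n$, and edge sets $E_i(T)\subseteq V_i(T)\times\mathbb{F}\times V_{i+1}(T)$; $(v,\alpha,w)\in E_i(T)$ is an edge from $v$ to $w$ with label $\alpha$ at time index $i$. Every trellis is assumed trim: each vertex has at least one outgoing and one incoming edge. $T$ is linear if every $V_i(T)$ is an $\mathbb{F}$-vector space and every $E_i(T)$ is a subspace of $V_i(T)\times\mathbb{F}\times V_{i+1}(T)$. A path of length $m$ is a sequence $v_0\alpha_0v_1\alpha_1\cdots\alpha_{m-1}v_m$ such that each $(v_j,\alpha_j,v_{j+1})$ is an edge. A cycle is a path of length $n$ starting in $V_0(T)$ with $v_n=v_0$; it is identified with $(\mathbf{v},\boldsymbol{\alpha})\in\prod_{i\in\mathbb{Z}_n}V_i(T)\times\mathbb{F}^n$. The label code $\mathbb{S}(T)$ is the set of cycles (a linear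 subspace if $T$ is linear); $L(\mathbf{v},\boldsymbol{\alpha}):=\boldsymbol{\alpha}$; $C(T):=L(\mathbb{S}(T))$. $T$ is reduced if every edge lies on some cycle. Spans. For $a\in\mathbb{Z}_n$ and $0\le l\le n-1$ put $[a,a+l]=\{a,a+1,\dots,a+l\}\subseteq\mathbb{Z}_n$ and $(a,a+l]=[a,a+l]\setminus\{a\}$. Such a pair $(a,l)$ is a span of length $l$; there are also two degenerate spans, $\emptyset$ (length $-1$, also written $(a,-1)$) and $\mathbb{Z}_n$ (length $n$, also written $(a,n)$). Partial order: $(a_1,l_1)\le(a_2,l_2)$ iff ($l_1\le l_2<n-1$ and $[a_1,a_1+l_1]\subseteq[a_2,a_2+l_2]$) or ($l_2=n-1$ and $(a_1,a_1+l_1]\subseteq(a_2,a_2+l_2]$) or $l_1=-1$ or $l_2=n$. For a linear trellis $T$, a nondegenerate span $(a,l)$ is a span of the cycle $(\mathbf{v},\boldsymbol{\alpha})$ if $\{i:v_i\neq0\}\subseteq(a,a+l]$ and $\{i:\alpha_i\ne0\}\subseteq[a,a+l]$; $\emptyset$ is a span only of the zero cycle and $\mathbb{Z}_n$ is a span of every cycle. The span subcode $\mathbb{S}_{\mathfrak{s}}(T)$ is the subspace of cycles having span $\mathfrak{s}$, and $\mathbb{S}_{<\mathfrak{s}}(T):=\sum_{\mathfrak{s}'\lneq\mathfrak{s}}\mathbb{S}_{\mathfrak{s}'}(T)$. *)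

From HB Require Import structures.
From mathcomp Require Import all_boot all_order all_algebra.
Set Implicit Arguments. Unset Strict Implicit. Unset Printing Implicit Defensive.
Import GRing.Theory.
Local Open Scope ring_scope.

Section Trellis.
Variables (F : finFieldType) (n : nat).

(* A linear trellis of length n over F: time indices are 'I_n (= Z_n, with
   successor ordS), vertex space at time i is 'rV[F]_(dim i) (a finite
   F-vector space; any finite F-vector space is isomorphic to one), edge set
   at time i is a subset of V_i x F x V_{i+1}. *)
Record trellis := Trellis {
  tdim : 'I_n -> nat;
  tedge : forall i : 'I_n, {set ('rV[F]_(tdim i) * F * 'rV[F]_(tdim (ordS i)))%type}
}.

Variable T : trellis.

Definition edge_of (i : 'I_n) (v : 'rV[F]_(tdim T i)) (a : F)
  (w : 'rV[F]_(tdim T (ordS i))) : bool := (v, a, w) \in tedge T i.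
Arguments edge_of : clear implicits.

Definition linear_trellis : Prop :=
  forall i : 'I_n,
    edge_of i 0 0 0 /\
    (forall v a w v' a' w', edge_of i v a w -> edge_of i v' a' w' ->
       edge_of i (v + v') (a + a') (w + w')) /\
    (forall (c : F) v a w, edge_of i v a w -> edge_of i (c *: v) (c * a) (c *: w)).

Definition trim : Prop :=
  (forall (i : 'I_n) (v : 'rV[F]_(tdim T i)), exists a w, edge_of i v a w) /\
  (forall (i : 'I_n) (w : 'rV[F]_(tdim T (ordS i))), exists v a, edge_of i v a w).

Record cyc := Cyc { cv : forall i : 'I_n, 'rV[F]_(tdim T i); ca : 'I_n -> F }.

Definition is_cycle (c : cyc) : Prop :=
  forall i : 'I_n, edge_of i (cv c i) (ca c i) (cv c (ordS i)).

Definition reduced : Prop :=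
  forall (i : 'I_n) v a w, edge_of i v a w ->
    exists c, is_cycle c /\ cv c i = v /\ ca c i = a /\ cv c (ordS i) = w.

Definition cyc0 : cyc := Cyc (fun i => 0) (fun _ => 0).
Definition cyc_add (c1 c2 : cyc) : cyc :=
  Cyc (fun i => cv c1 i + cv c2 i) (fun i => ca c1 i + ca c2 i).

Inductive in_sum (J : Type) (fam : J -> cyc -> Prop) : cyc -> Prop :=
  | in_sum0 : in_sum fam cyc0
  | in_sumD (j : J) (c d : cyc) : fam j c -> in_sum fam d -> in_sum fam (cyc_add c d).

End Trellis.

(* Spans of length n: the empty span (length -1), the full span Z_n
   (length n), and nondegenerate spans (a, l) with a : Z_n, 0 <= l <= n-1. *)
Inductive tspan (n : nat) :=
  | SEmpty
  | SFull
  | SInt of 'I_n & 'I_n.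
Arguments SEmpty {n}.
Arguments SFull {n}.

Definition offs (n : nat) (a i : 'I_n) : nat := ((i + n - a) %% n)%N.
Definition inC (n : nat) (a l i : 'I_n) : bool := (offs a i <= l)%N.
Definition inO (n : nat) (a l i : 'I_n) : bool := (0 < offs a i <= l)%N.

Definition span_le (n : nat) (s1 s2 : tspan n) : bool :=
  match s1, s2 with
  | SEmpty, _ => true
  | _, SFull => true
  | SFull, _ => false
  | SInt _ _, SEmpty => false
  | SInt a1 l1, SInt a2 l2 =>
      [&& (l1 <= l2)%N, (l2 < n.-1)%N & [forall i, inC a1 l1 i ==> inC a2 l2 i]]
      || ((l2 == n.-1 :> nat) && [forall i, inO a1 l1 i ==> inO a2 l2 i])
  end.

Definition span_lt (n : nat) (s1 s2 : tspan n) : Prop := span_le s1 s2 /\ s1 <> s2.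

Definition has_span (F : finFieldType) (n : nat) (T : trellis F n)
  (s : tspan n) (c : cyc T) : Prop :=
  match s with
  | SEmpty => (forall i, cv c i = 0) /\ (forall i, ca c i = 0)
  | SFull => True
  | SInt a l => (forall i, cv c i != 0 -> inO a l i) /\ (forall i, ca c i != 0 -> inC a l i)
  end.

Definition Sspan (F : finFieldType) (n : nat) (T : trellis F n) (s : tspan n)
  (c : cyc T) : Prop := is_cycle c /\ has_span s c.

Arguments Sspan {F n} T s c.

Definition Sless (F : finFieldType) (n : nat) (T : trellis F n) (s : tspan n)
  (c : cyc T) : Prop :=
  in_sum (fun s' : {s' : tspan n | span_lt s' s} => Sspan T (proj1_sig s')) c.
Arguments Sless {F n} T s c.

From mathcomp Require Import all_boot all_order all_algebra zify.
From Stdlib Require Import FunctionalExtensionality.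
Set Implicit Arguments. Unset Strict Implicit. Unset Printing Implicit Defensive.
Import GRing.Theory.

(* For the degenerate spans there is nothing to do, and for a span (a, 0) the
   hypothesis forces every summand, hence c, to carry label 0 at a, so c = 0.
   Let s = (a, L) with L > 0. Since s is not below s_i, the span s_i misses some
   vertex time of the window (a, a+L], so every summand d vanishes at a vertex of
   that window. Cutting d there, its part from the cut on, run once around Z_n
   back to time a, is a path P_d that starts at the zero vertex, carries label 0
   at a, agrees with d from a+L on and ends at the vertex of d at time a. These
   conditions on the pair (d, P_d) are linear, so c = sum d has such a path
   P = sum P_d. As c vanishes at a and outside [a, a+L], P is a cycle with span
   (a+1, L-1) and c - P a cycle with span (a, L-1), both strictly below s. *)

Section Offsets.
Variable n : nat.
Implicit Types a i j : 'I_n.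

Lemma offsE a i : offs a i = if (a <= i)%N then i - a else i + n - a.
Proof.
rewrite /offs; have := ltn_ord a; have := ltn_ord i => ? ?.
case: leqP => ?; last by rewrite modn_small; lia.
have -> : (i + n - a = (i - a) + n)%N by lia.
by rewrite modnDr modn_small; lia.
Qed.

Lemma ordSE i : (ordS i : nat) = if (i.+1 < n)%N then i.+1 else 0.
Proof.
rewrite /=; have := ltn_ord i => ?; case: ltnP => ?; first exact: modn_small.
have -> : i.+1 = n by lia.
by rewrite modnn.
Qed.

Lemma offs_lt a i : (offs a i < n)%N.
Proof. by rewrite /offs ltn_pmod // (leq_ltn_trans _ (ltn_ord i)). Qed.

Lemma offs_inj a : injective (offs a).
Proof.
move=> i j; have := ltn_ord a; have := ltn_ord i; have := ltn_ord j => ? ? ?.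
rewrite !offsE => h; apply: ord_inj; move: h.
by case: (leqP a i); case: (leqP a j); lia.
Qed.

Lemma offs_self a : offs a a = 0.
Proof. by rewrite offsE leqnn subnn. Qed.

Lemma offs_eq0 a i : (offs a i == 0) = (i == a).
Proof.
apply/eqP/eqP => [|->]; last exact: offs_self.
by rewrite -(offs_self a) => /offs_inj.
Qed.

Lemma offs_ordSr a i :
  offs a (ordS i) = if ordS i == a then 0 else (offs a i).+1.
Proof.
case: eqP => [->|/eqP]; first exact: offs_self.
rewrite -offs_eq0; have := ltn_ord a; have := ltn_ord i => ? ?.
by rewrite !offsE; case: ifP (ordSE i) => ? ->; repeat (case: ifP => ?); lia.
Qed.

Lemma offs_ordSl a i :
  offs (ordS a) i = if i == a then n.-1 else (offs a i).-1.
Proof.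
have := ltn_ord a; have := ltn_ord i => ? ?.
case: eqVneq => [->|/eqP ia]; last have {ia} : (i : nat) <> a by move/ord_inj.
all: rewrite !offsE; case: ifP (ordSE a) => ? ->.
all: by rewrite ?leq0n ?subn0; repeat (case: ifP => ?); lia.
Qed.

Lemma offs_last a i : ordS i = a -> offs a i = n.-1.
Proof.
move=> Sia; have := ordSE i; rewrite Sia offsE.
by have := ltn_ord i; repeat (case: ifP => ?); lia.
Qed.

Lemma offs_trans a b j : offs b j = ((offs b a + offs a j) %% n)%N.
Proof.
have := ltn_ord a; have := ltn_ord b; have := ltn_ord j => ? ? ?.
have [small|big] := ltnP (offs b a + offs a j) n.
  by rewrite modn_small //; move: small; rewrite !offsE; repeat (case: ifP => ?); lia.
rewrite -(subnK big) modnDr modn_small; move: big; rewrite !offsE;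
  by repeat (case: ifP => ?); lia.
Qed.

Lemma offs_surj a k : (k < n)%N -> exists j, offs a j = k.
Proof.
move=> lt_k; have := ltn_ord a => ?.
have [lt_ak|le_ak] := ltnP (a + k) n.
  by exists (Ordinal lt_ak); rewrite offsE /=; case: ifP; lia.
have lt_akn : (a + k - n < n)%N by lia.
by exists (Ordinal lt_akn); rewrite offsE /=; case: ifP; lia.
Qed.

End Offsets.

Section Spans.
Variable n : nat.
Implicit Types (a l t : 'I_n) (s : tspan n).

Definition span_vertices s t : bool :=
  match s with SEmpty => false | SFull => true | SInt a l => inO a l t end.

Definition span_labels s t : bool :=
  match s with SEmpty => false | SFull => true | SInt a l => inC a l t end.

(* Unlike the cyclic [ord_pred], this predecessor stops at 0. *)
Definition ord_predn (l : 'I_n) : 'I_n :=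
  Ordinal (leq_ltn_trans (leq_pred l) (ltn_ord l)).

Lemma span_le_SInt a l a' l' : (l <= l')%N ->
    (forall t, inC a l t -> inC a' l' t) -> (forall t, inO a l t -> inO a' l' t) ->
  span_le (SInt a l) (SInt a' l').
Proof.
move=> le_l subC subO; have := ltn_ord l' => ?; apply/orP.
have [lt_l'|ge_l'] := ltnP l' n.-1.
  by left; apply/and3P; split => //; apply/forallP => t; apply/implyP/subC.
right; apply/andP; split; first by apply/eqP; lia.
by apply/forallP => t; apply/implyP/subO.
Qed.

Lemma SInt_pred_lt a l : (0 < l)%N -> span_lt (SInt a (ord_predn l)) (SInt a l).
Proof.
move=> l_gt0; split; last by case=> /(congr1 val) /=; lia.
by apply: span_le_SInt => [|t|t]; rewrite /inC /inO /=; lia.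
Qed.

Lemma SInt_ordS_pred_lt a l :
  (0 < l)%N -> span_lt (SInt (ordS a) (ord_predn l)) (SInt a l).
Proof.
move=> l_gt0; split; last by case=> _ /(congr1 val) /=; lia.
apply: span_le_SInt => [|t|t]; rewrite /inC /inO ?offs_ordSl /=; first lia.
all: have := ltn_ord l; case: eqP => [->|/eqP]; rewrite ?offs_self -?offs_eq0; lia.
Qed.

Lemma span_lt_full s : ~~ span_le SFull s -> span_lt s SFull.
Proof. by case: s => // *; split => //; case. Qed.

Lemma not_span_le_closed a l a' l' : (l' < n.-1)%N ->
  ~~ span_le (SInt a l) (SInt a' l') -> exists t, (offs a t <= l)%N /\ (l' < offs a' t)%N.
Proof.
move=> lt_l' /norP[/= not_le _]; have [le_l|lt_l] := leqP l l'.
  rewrite le_l lt_l' /= in not_le; case/forallPn: not_le => t.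
  by rewrite negb_imply /inC -ltnNge => /andP[]; exists t.
have [|le_a] := ltnP l' (offs a' a); first by exists a; rewrite offs_self.
have [t at_t] : exists t, offs a t = (l' - offs a' a).+1.
  by apply: offs_surj; have := ltn_ord l; lia.
by exists t; rewrite (offs_trans a a' t) at_t modn_small; have := ltn_ord l; lia.
Qed.

Lemma not_span_le_vertex a l s : (0 < l)%N -> ~~ span_le (SInt a l) s ->
  exists t, (0 < offs a t <= l)%N /\ ~~ span_vertices s t.
Proof.
move=> l_gt0; case: s => [_|//|a' l' not_le].
  have [t at1] : exists t, offs a t = 1%N by apply: offs_surj; have := ltn_ord l; lia.
  by exists t; rewrite at1.
have [lt_l'|ge_l'] := ltnP l' n.-1; last first.
  move: not_le => /norP[_]; rewrite /= (_ : l' == n.-1 :> nat); last first.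
    by apply/eqP; have := ltn_ord l'; lia.
  by case/forallPn => t; rewrite negb_imply /inO => /andP[]; exists t.
have [t [at_t a't_t]] := not_span_le_closed lt_l' not_le.
have [at0|at_gt0] := posnP (offs a t); last by exists t; rewrite /= /inO; lia.
move/eqP: at0 a't_t; rewrite offs_eq0 => /eqP-> a'a_t.
have Sa_a : ordS a != a.
  apply/eqP => /(congr1 (@nat_of_ord n)); rewrite ordSE.
  by have := ltn_ord l; have := ltn_ord a; case: ifP; lia.
exists (ordS a); rewrite /= /inO !offs_ordSr (negbTE Sa_a) offs_self.
by case: eqP; lia.
Qed.

Lemma not_span_le_point a l s : (l = 0 :> nat) -> ~~ span_le (SInt a l) s ->
  ~~ span_labels s a.
Proof.
move=> l0; case: s => [//|//|a' l' not_le]; rewrite /= /inC -ltnNge.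
have [lt_l'|ge_l'] := ltnP l' n.-1.
  have [t [at_t a't_t]] := not_span_le_closed lt_l' not_le.
  by move: at_t; rewrite l0 leqn0 offs_eq0 => /eqP <-.
case/negP: not_le; apply: span_le_SInt => [|t|t]; rewrite /inC /inO l0 //; last lia.
by rewrite leqn0 offs_eq0 => /eqP->; have := offs_lt a' a; lia.
Qed.

End Spans.

Section CycleSpace.
Variables (F : finFieldType) (n : nat) (T : trellis F n).
Implicit Types (c d e : cyc T) (s : tspan n).
Local Open Scope ring_scope.

Definition cyc_sub c d : cyc T :=
  Cyc (fun t => cv c t - cv d t) (fun t => ca c t - ca d t).

Lemma cyc_ext c d : (forall t, cv c t = cv d t) -> (forall t, ca c t = ca d t) -> c = d.
Proof.
case: c d => v x [v' x'] /= eq_v eq_x.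
by rewrite (functional_extensionality_dep _ _ eq_v) (functional_extensionality _ _ eq_x).
Qed.

Lemma cyc_addA c d e : cyc_add c (cyc_add d e) = cyc_add (cyc_add c d) e.
Proof. by apply: cyc_ext => t /=; rewrite addrA. Qed.

Lemma cyc_add0 c : cyc_add (cyc0 T) c = c.
Proof. by apply: cyc_ext => t /=; rewrite add0r. Qed.

Lemma cyc_addr0 c : cyc_add c (cyc0 T) = c.
Proof. by apply: cyc_ext => t /=; rewrite addr0. Qed.

Lemma cyc_add_subKC c d : cyc_add d (cyc_sub c d) = c.
Proof. by apply: cyc_ext => t /=; rewrite addrC subrK. Qed.

Section Sums.
Variables (J : Type) (fam : J -> cyc T -> Prop).

Lemma in_sum_ind (Q : cyc T -> Prop) c :
    Q (cyc0 T) -> (forall c d, Q c -> Q d -> Q (cyc_add c d)) ->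
    (forall j c, fam j c -> Q c) ->
  in_sum fam c -> Q c.
Proof. by move=> Q0 QD Qfam; elim=> // j {}c d /Qfam Qc _ /(QD _ _ Qc). Qed.

Lemma in_sum1 j c : fam j c -> in_sum fam c.
Proof. by move=> fam_c; rewrite -[c]cyc_addr0; apply: in_sumD fam_c (in_sum0 _). Qed.

Lemma in_sum_add c d : in_sum fam c -> in_sum fam d -> in_sum fam (cyc_add c d).
Proof.
elim=> [|j {}c c' fam_c _ IH] sum_d; first by rewrite cyc_add0.
by rewrite -cyc_addA; apply: in_sumD fam_c (IH sum_d).
Qed.

End Sums.

Lemma Sless_of_lt s s' c : span_lt s' s -> Sspan T s' c -> Sless T s c.
Proof. by move=> lt_s; apply: (@in_sum1 _ _ (exist _ s' lt_s)). Qed.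

Lemma Sless_add s c d : Sless T s c -> Sless T s d -> Sless T s (cyc_add c d).
Proof. exact: in_sum_add. Qed.

Lemma has_span_vertex0 s c t : has_span s c -> ~~ span_vertices s t -> cv c t = 0.
Proof.
case: s => [[-> //]|//|a l [c_v _] not_t].
by apply/eqP; apply: contraNT not_t; apply: c_v.
Qed.

Lemma has_span_label0 s c t : has_span s c -> ~~ span_labels s t -> ca c t = 0.
Proof.
case: s => [[_ -> //]|//|a l [_ c_x] not_t].
by apply/eqP; apply: contraNT not_t; apply: c_x.
Qed.

Lemma has_span_SInt a l c :
    (forall t, ~~ inO a l t -> cv c t = 0) -> (forall t, ~~ inC a l t -> ca c t = 0) ->
  has_span (SInt a l) c.
Proof.
by move=> c_v c_x; split=> t; apply: contraNT; [move/c_v | move/c_x] => ->.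
Qed.

Lemma Sless_of_in_sum (I : Type) (s_ : I -> tspan n) s c :
    (forall i, span_lt (s_ i) s) -> in_sum (fun i => Sspan T (s_ i)) c ->
  Sless T s c.
Proof.
move=> lt_s; apply: in_sum_ind; [exact: in_sum0 | exact: Sless_add |].
by move=> i d; apply: Sless_of_lt.
Qed.

Lemma in_sum_label_point (I : Type) (s_ : I -> tspan n) (a l : 'I_n) c :
    (l = 0 :> nat) ->
    (forall i, ~~ span_le (SInt a l) (s_ i)) -> in_sum (fun i => Sspan T (s_ i)) c ->
  ca c a = 0.
Proof.
move=> l0 not_le; apply: (in_sum_ind (Q := fun c => ca c a = 0)) => //=.
  by move=> c1 c2 -> ->; rewrite addr0.
by move=> i d [_ /has_span_label0]; apply; apply: not_span_le_point (not_le i).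
Qed.

Lemma Sspan_point_eq0 (a l : 'I_n) c :
  (l = 0 :> nat) -> Sspan T (SInt a l) c -> ca c a = 0 -> c = cyc0 T.
Proof.
move=> l0 [_ c_span] c_a; apply: cyc_ext => t /=.
  by apply: has_span_vertex0 c_span _; rewrite /= /inO l0; lia.
have [->//|t_a] := eqVneq t a.
by apply: has_span_label0 c_span _; rewrite /= /inC l0 leqn0 offs_eq0.
Qed.

End CycleSpace.

Section LinearTrellis.
Variables (F : finFieldType) (n : nat) (T : trellis F n).
Hypothesis T_linear : linear_trellis T.
Implicit Types (c d P : cyc T) (t : 'I_n).
Local Open Scope ring_scope.

Lemma edge0 t : edge_of (T := T) (i := t) 0 0 0.
Proof. by case: (T_linear t). Qed.

Lemma edgeD t v x w v' x' w' : edge_of (T := T) (i := t) v x w -> edge_of v' x' w' ->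
  edge_of (v + v') (x + x') (w + w').
Proof. by case: (T_linear t) => _ [edge_add _]; apply: edge_add. Qed.

Lemma edgeB t v x w v' x' w' : edge_of (T := T) (i := t) v x w -> edge_of v' x' w' ->
  edge_of (v - v') (x - x') (w - w').
Proof.
case: (T_linear t) => _ [_ edge_scale] e e'; apply: edgeD e _.
by rewrite -(scaleN1r v') -(scaleN1r w') -(mulN1r x'); apply: edge_scale.
Qed.

Lemma is_cycleB c d : is_cycle c -> is_cycle d -> is_cycle (cyc_sub c d).
Proof. by move=> cyc_c cyc_d t; apply: edgeB. Qed.

Section Window.
Variables (a L : 'I_n).
Hypothesis L_gt0 : (0 < L)%N.

Definition cut_path c P : Prop :=
  [/\ forall t, edge_of (cv P t) (ca P t) (cv (if ordS t == a then c else P) (ordS t)),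
      forall t, (offs a t <= 1)%N -> cv P t = 0,
      ca P a = 0 &
      forall t, (L <= offs a t)%N -> cv P t = cv c t /\ ca P t = ca c t].

Lemma cut_path0 : cut_path (cyc0 T) (cyc0 T).
Proof. by split=> // t; case: ifP => _; apply: edge0. Qed.

Lemma cut_pathD c d P Q :
  cut_path c P -> cut_path d Q -> cut_path (cyc_add c d) (cyc_add P Q).
Proof.
move=> [P_edge P_v P_x P_c] [Q_edge Q_v Q_x Q_d]; split=> [t|t at_le1||t L_le] /=.
- by move: (P_edge t) (Q_edge t); case: (ordS t == a); apply: edgeD.
- by rewrite P_v // Q_v // addr0.
- by rewrite P_x Q_x addr0.
- by case: (P_c t L_le) (Q_d t L_le) => -> -> [-> ->].
Qed.

Definition cyc_tail d tau : cyc T :=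
  Cyc (fun t => if (offs a tau <= offs a t)%N then cv d t else 0)
      (fun t => if (offs a tau <= offs a t)%N then ca d t else 0).

Lemma cut_path_tail d tau : is_cycle d -> (0 < offs a tau <= L)%N -> cv d tau = 0 ->
  cut_path d (cyc_tail d tau).
Proof.
move=> cyc_d /andP[tau_gt0 tau_le] d_tau; have tau_lt := offs_lt a tau.
split=> [t|t at_le1||t L_le] /=.
- case: (ordS t =P a) => [Sta|/eqP Sta] /=.
    by rewrite (offs_last Sta) (_ : offs a tau <= n.-1)%N; [apply: cyc_d | lia].
  have [le_t|lt_t] := leqP (offs a tau) (offs a t).
    by rewrite offs_ordSr (negbTE Sta) (leqW le_t); apply: cyc_d.
  rewrite offs_ordSr (negbTE Sta).
  have [tau_St|] := eqVneq (offs a tau) (offs a t).+1; last first.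
    by rewrite eqn_leq lt_t andbT => /negbTE->; apply: edge0.
  have d_St : cv d (ordS t) = 0.
    by rewrite (@offs_inj _ a (ordS t) tau) // offs_ordSr (negbTE Sta).
  by rewrite tau_St leqnn d_St; apply: edge0.
- by case: ifP => // le_t; rewrite (@offs_inj _ a t tau) //; lia.
- by rewrite offs_self leqNgt tau_gt0.
- by rewrite (leq_trans tau_le L_le).
Qed.

Section CutPath.
Variables c P : cyc T.
Hypotheses (c_span : Sspan T (SInt a L) c) (cut_cP : cut_path c P).

Let c_out t : (L < offs a t)%N -> cv c t = 0 /\ ca c t = 0.
Proof.
case: c_span => _ c_has lt_t; split.
  by apply: has_span_vertex0 c_has _; rewrite /= /inO; lia.
by apply: has_span_label0 c_has _; rewrite /= /inC; lia.
Qed.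

Let c_a : cv c a = 0.
Proof. by case: c_span => _ /has_span_vertex0->; rewrite //= /inO offs_self. Qed.

Lemma cut_path_is_cycle : is_cycle P.
Proof.
case: cut_cP => P_edge P_v _ _ t; move: (P_edge t); case: (ordS t =P a) => // Sta.
have Sta0 : offs a (ordS t) = 0 by rewrite Sta offs_self.
have c_St : cv c (ordS t) = 0 by rewrite Sta c_a.
by rewrite c_St (P_v (ordS t)) ?Sta0.
Qed.

Lemma cut_path_span : Sspan T (SInt (ordS a) (ord_predn L)) P.
Proof.
case: cut_cP => _ P_v P_x P_c; split; first exact: cut_path_is_cycle.
have P_out t : (L < offs a t)%N -> cv P t = 0 /\ ca P t = 0.
  by move=> lt_t; case: (P_c t (ltnW lt_t)) => -> ->; apply: c_out.
apply: has_span_SInt => t; rewrite /inO /inC offs_ordSl /=.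
  case: eqP => [->|/eqP t_a]; first by rewrite P_v ?offs_self.
  move: t_a; rewrite -offs_eq0 => at_gt0 not_in.
  have [|gt1] := leqP (offs a t) 1; first exact: P_v.
  by case: (P_out t) => //; lia.
case: eqP => [->|/eqP t_a]; first by rewrite P_x.
by move: t_a; rewrite -offs_eq0 => at_gt0 not_in; case: (P_out t) => //; lia.
Qed.

Lemma cut_path_span_sub : Sspan T (SInt a (ord_predn L)) (cyc_sub c P).
Proof.
case: cut_cP => _ P_v _ P_c; split.
  by apply: is_cycleB cut_path_is_cycle; case: c_span.
apply: has_span_SInt => t; rewrite /inO /inC /= => not_in.
  have [at0|at_gt0] := posnP (offs a t).
    by move/eqP: at0; rewrite offs_eq0 => /eqP->; rewrite c_a P_v ?offs_self ?subr0.
  by case: (P_c t) => [|-> _]; rewrite ?subrr //; lia.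
by case: (P_c t) => [|_ ->]; rewrite ?subrr //; lia.
Qed.

End CutPath.

Lemma Sless_of_cut_path c P :
  Sspan T (SInt a L) c -> cut_path c P -> Sless T (SInt a L) c.
Proof.
move=> c_span cut_cP; rewrite -(cyc_add_subKC c P).
apply: Sless_add.
  exact: Sless_of_lt (SInt_ordS_pred_lt a L_gt0) (cut_path_span c_span cut_cP).
exact: Sless_of_lt (SInt_pred_lt a L_gt0) (cut_path_span_sub c_span cut_cP).
Qed.

Lemma cut_path_in_sum (I : Type) (s_ : I -> tspan n) c :
    (forall i, ~~ span_le (SInt a L) (s_ i)) ->
    in_sum (fun i => Sspan T (s_ i)) c ->
  exists P, cut_path c P.
Proof.
move=> not_le; apply: (in_sum_ind (Q := fun c => exists P, cut_path c P)).
- by exists (cyc0 T); apply: cut_path0.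
- by move=> c1 c2 [P1 cut1] [P2 cut2]; exists (cyc_add P1 P2); apply: cut_pathD.
move=> i d [cyc_d d_span].
have [tau [tau_in not_v]] := not_span_le_vertex L_gt0 (not_le i).
by exists (cyc_tail d tau); apply: cut_path_tail => //; apply: has_span_vertex0 d_span _.
Qed.

End Window.
End LinearTrellis.

Theorem mainTheorem1 (F : finFieldType) (n : nat) (T : trellis F n)
  (I : Type) (s_ : I -> tspan n) (s : tspan n) :
  (0 < n)%N -> linear_trellis T -> trim T -> reduced T ->
  (forall i : I, ~~ span_le s (s_ i)) ->
  forall c : cyc T,
    Sspan T s c -> in_sum (fun i : I => Sspan T (s_ i)) c -> Sless T s c.
Proof.
move=> _ T_linear _ _ not_le c c_span c_sum.
case: s not_le c_span => [||a L] not_le c_span.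
- by apply: Sless_of_in_sum c_sum => i; case/negP: (not_le i).
- by apply: Sless_of_in_sum c_sum => i; apply: span_lt_full.
have [L0|L_gt0] := posnP L.
  rewrite (Sspan_point_eq0 L0 c_span (in_sum_label_point L0 not_le c_sum)).
  exact: in_sum0.
have [P cut_cP] := cut_path_in_sum T_linear L_gt0 not_le c_sum.
exact: Sless_of_cut_path c_span cut_cP.
Qed.
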